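(* Let $C_1,\dots,C_m\subseteq\mathbb{R}^L$ be closed convex sets (the convex feasibility problem $T$), let $\mathrm{Prox}_T:\mathbb{R}^L\to[0,\infty)$ be a proximity function, let $\mathcal{A}:\mathbb{R}^L\to\mathbb{R}^L$ be an algorithmic operator, and let $\phi:\mathbb{R}^L\to\mathbb{R}$ be a target function. Assume that the basic algorithm defined by $\mathcal{A}$ is strongly perturbation resilient and that there is $\varepsilon>0$ such that for every $x^0\in\mathbb{R}^L$ the $\varepsilon$-output of the sequence $x^{k+1}=\mathcal{A}(x^k)$ exists. Let $\{\eta_\ell\}_{\ell=0}^\infty$ be a summable sequence of positive real numbers, let $\{N_k\}_{k=0}^\infty$ be a sequence of positive integers bounded by some positive integer $N$, and let $\bar y\in\mathbb{R}^L$. Let $\{y^k\}_{k=0}^\infty$ be any sequence produced by the following procedure (Algorithm 1): set $y^0=\bar y$ and a counter $\ell=0$; for each $k\ge 0$, set $y^{k,0}=y^k$, and for $n=0,1,\dots,N_k-1$ choose any $v^{k,n}\in\mathcal{B}_{\eta_\ell,\phi}(y^{k,n})$, set $y^{k,n+1}=y^{k,n}+v^{k,n}$ and increase $\ell$ by $1$; then set $y^{k+1}=\mathcal{A}(y^{k,N_k})$. Then for every $\varepsilon'>\varepsilon$, the $\varepsilon'$-output of the sequence $\{y^k\}_{k=0}^\infty$ with respect to $(T,\mathrm{Prox}_T)$ exists.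
   Context: Given $\varepsilon>0$ and a sequence $\{x^k\}_{k=0}^\infty\subseteq\mathbb{R}^L$, an element $x^K$ is the $\varepsilon$-output of the sequence (with respect to $(T,\mathrm{Prox}_T)$) if $\mathrm{Prox}_T(x^K)\le\varepsilon$ and $\mathrm{Prox}_T(x^k)>\varepsilon$ for all $0\le k<K$. The basic algorithm $x^{k+1}=\mathcal{A}(x^k)$ is strongly perturbation resilient if (i) there exists $\varepsilon>0$ such that the $\varepsilon$-output of $\{x^k\}$ exists for every $x^0\in\mathbb{R}^L$; and (ii) for every $\varepsilon>0$ for which the $\varepsilon$-output of $\{x^k\}$ exists for every $x^0$, the $\varepsilon'$-output also exists for every $\varepsilon'>\varepsilon$ and every sequence $\{y^k\}$ generated by $y^{k+1}=\mathcal{A}(y^k+\beta_k v^k)$, where $\{v^k\}\subseteq\mathbb{R}^L$ is bounded and $\beta_k\ge0$ with $\sum_k\beta_k<\infty$. For $\delta>0$ and $y\in\mathbb{R}^L$, the nonascending $\delta$-ball is $\mathcal{B}_{\delta,\phi}(y):=\{d\in\mathbb{R}^L:\|d\|\le\delta,\ \phi(y+d)\le\phi(y)\}$ ($\|\cdot\|$ the Euclidean norm). *)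

From HB Require Import structures.
From mathcomp Require Import all_boot all_order all_algebra.
From mathcomp Require Import all_classical all_reals all_analysis.
Set Implicit Arguments. Unset Strict Implicit. Unset Printing Implicit Defensive.
Import Order.TTheory GRing.Theory Num.Theory.
Import numFieldNormedType.Exports.
Local Open Scope classical_set_scope.
Local Open Scope ring_scope.

Section Defs.
Variables (R : realType) (L : nat).
Notation V := 'rV[R]_L.

Definition eucnorm (x : V) : R := Num.sqrt (\sum_(i < L) (x ord0 i) ^+ 2).

Definition is_eps_output (Prox : V -> R) (eps : R) (x : nat -> V) (K : nat) : Prop :=
  Prox (x K) <= eps /\ (forall k, (k < K)%N -> eps < Prox (x k)).

Definition eps_output_exists (Prox : V -> R) (eps : R) (x : nat -> V) : Prop :=
  exists K, is_eps_output Prox eps x K.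

Definition basic_seq (A : V -> V) (x0 : V) (k : nat) : V := iter k A x0.

Definition bounded_seq (v : nat -> V) : Prop :=
  exists M : R, forall k, eucnorm (v k) <= M.

Definition summable_seq (b : nat -> R) : Prop := cvgn (series b).

Definition strongly_perturbation_resilient (Prox : V -> R) (A : V -> V) : Prop :=
  (exists eps : R, 0 < eps /\ forall x0, eps_output_exists Prox eps (basic_seq A x0))
  /\
  (forall eps : R, 0 < eps ->
     (forall x0, eps_output_exists Prox eps (basic_seq A x0)) ->
     forall eps' : R, eps < eps' ->
     forall (y v : nat -> V) (beta : nat -> R),
       bounded_seq v -> (forall k, 0 <= beta k) -> summable_seq beta ->
       (forall k, y k.+1 = A (y k + beta k *: v k)) ->
       eps_output_exists Prox eps' y).

Definition nonasc_ball (phi : V -> R) (delta : R) (y : V) : set V :=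
  [set d | eucnorm d <= delta /\ phi (y + d) <= phi y].

(* y is produced by Algorithm 1 with inner iterates yin k n and perturbations v k n;
   the counter ell at the start of outer step k equals \sum_(j < k) N j. *)
Definition algorithm1 (A : V -> V) (phi : V -> R) (eta : nat -> R) (N : nat -> nat)
  (ybar : V) (y : nat -> V) (yin : nat -> nat -> V) (v : nat -> nat -> V) : Prop :=
  y 0%N = ybar /\
  (forall k, yin k 0%N = y k) /\
  (forall k n, (n < N k)%N ->
     nonasc_ball phi (eta ((\sum_(j < k) N j) + n)%N) (yin k n) (v k n) /\
     yin k n.+1 = yin k n + v k n) /\
  (forall k, y k.+1 = A (yin k (N k))).

End Defs.

From HB Require Import structures.
From mathcomp Require Import all_boot all_order all_algebra.
From mathcomp Require Import all_classical all_reals all_analysis.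
Import Order.TTheory GRing.Theory Num.Theory.
Import numFieldNormedType.Exports.
Set Implicit Arguments.
Unset Strict Implicit.
Unset Printing Implicit Defensive.
Local Open Scope classical_set_scope.
Local Open Scope ring_scope.

(* Algorithm 1 is a run of the perturbed basic algorithm.  The N_k
   superiorization steps of outer step k move y^k by at most
   beta_k := eta_(l_k) + ... + eta_(l_k + N_k - 1) in every coordinate, where
   l_k = N_0 + ... + N_(k-1); so y^(k+1) = A (y^k + beta_k w^k) with w^k
   bounded.  The partial sums of (beta_k) form a subsequence of those of eta,
   hence (beta_k) is summable and strong perturbation resilience applies. *)

Section block_sums.
Variables (V : zmodType) (N : nat -> nat) (u : nat -> V).

Definition block_start (k : nat) : nat := (\sum_(j < k) N j)%N.

Definition block_sum (k : nat) : V := \sum_(n < N k) u (block_start k + n).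

Lemma series_block_sum n : series block_sum n = series u (block_start n).
Proof.
elim: n => [|n IH].
  by rewrite /block_start big_ord0 !seriesEord /= !big_ord0.
rewrite seriesSr IH /block_start big_ord_recr /= -/(block_start n).
rewrite addnC series_addn; congr (_ + _).
rewrite -{1}[block_start n]add0n big_addn addnK big_mkord.
by apply: eq_bigr => i _; rewrite addnC.
Qed.

End block_sums.

Lemma leq_block_start (N : nat -> nat) k :
  (forall j, 0 < N j)%N -> (k <= block_start N k)%N.
Proof.
move=> N_gt0; elim: k => // k IH.
by rewrite /block_start big_ord_recr /= -addn1 leq_add.
Qed.

Lemma block_start_cvgy (N : nat -> nat) :
  (forall j, 0 < N j)%N -> block_start N @ \oo --> \oo.
Proof.
move=> N_gt0 P [n _ Pn]; exists n => // k /= nk.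
exact/Pn/(leq_trans nk)/leq_block_start.
Qed.

Lemma is_cvg_series_block_sum (K : numDomainType)
    (V : pseudoMetricNormedZmodType K) (N : nat -> nat) (u : nat -> V) :
  (forall j, 0 < N j)%N -> cvgn (series u) -> cvgn (series (block_sum N u)).
Proof.
move=> N_gt0 /cvg_ex[l ul]; apply/cvg_ex; exists l.
rewrite (funext (series_block_sum N u)).
by apply: cvg_comp (block_start_cvgy N_gt0) _.
Qed.

Lemma block_sum_gt0 (R : numDomainType) (N : nat -> nat) (u : nat -> R) k :
  (forall j, 0 < N j)%N -> (forall l, 0 < u l) -> 0 < block_sum N u k.
Proof.
move=> N_gt0 u_gt0; rewrite /block_sum; move: (N_gt0 k).
case: (N k) => // n _; rewrite big_ord_recl ltr_pwDl // sumr_ge0 // => i _.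
exact: ltW.
Qed.

Section euclidean_norm.
Variables (R : realType) (L : nat).

Lemma ler_norm_eucnorm (x : 'rV[R]_L) i : `|x ord0 i| <= eucnorm x.
Proof.
rewrite /eucnorm -sqrtr_sqr ler_wsqrtr //.
by rewrite (bigD1 i) //= lerDl sumr_ge0 // => j _; apply: sqr_ge0.
Qed.

Lemma eucnorm_le_sum_norm (x : 'rV[R]_L) :
  eucnorm x <= \sum_(i < L) `|x ord0 i|.
Proof.
set s := \sum_(i < L) _; have s_ge0 : 0 <= s by apply: sumr_ge0.
rewrite /eucnorm -(ger0_norm s_ge0) -sqrtr_sqr ler_wsqrtr //.
rewrite expr2 mulr_suml; apply: ler_sum => i _.
rewrite -real_normK ?num_real // expr2 ler_wpM2l //.
by rewrite /s (bigD1 i) //= lerDl sumr_ge0.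
Qed.

Lemma bounded_seq_entrywise (w : nat -> 'rV[R]_L) (M : R) :
  (forall k i, `|w k ord0 i| <= M) -> bounded_seq w.
Proof.
move=> wM; exists (L%:R * M) => k.
apply: le_trans (eucnorm_le_sum_norm _) _.
have -> : L%:R * M = \sum_(i < L) M by rewrite sumr_const card_ord mulr_natl.
by apply: ler_sum => i _.
Qed.

End euclidean_norm.

Section algorithm1.
Variables (R : realType) (L : nat) (A : 'rV[R]_L -> 'rV[R]_L).
Variables (phi : 'rV[R]_L -> R) (eta : nat -> R) (N : nat -> nat).
Variables (ybar : 'rV[R]_L) (y : nat -> 'rV[R]_L).
Variables (yin v : nat -> nat -> 'rV[R]_L).
Hypothesis alg : algorithm1 A phi eta N ybar y yin v.

Lemma algorithm1_inner_displacement k n :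
  (n <= N k)%N -> yin k n - y k = \sum_(i < n) v k i.
Proof.
have [_ [yin0 [step _]]] := alg.
elim: n => [_|n IH lt_n]; first by rewrite yin0 subrr big_ord0.
have [_ ->] := step k n lt_n.
by rewrite big_ord_recr /= -IH ?(ltnW lt_n) // addrAC.
Qed.

Lemma algorithm1_outer_displacement_entry k i :
  `|(yin k (N k) - y k) ord0 i| <= block_sum N eta k.
Proof.
have [_ [_ [step _]]] := alg.
rewrite algorithm1_inner_displacement // summxE.
apply: le_trans (ler_norm_sum _ _ _) _; apply: ler_sum => n _.
apply: le_trans (ler_norm_eucnorm _ _) _.
by have [[]] := step k n (ltn_ord n).
Qed.

Definition normalized_displacement k : 'rV[R]_L :=
  (block_sum N eta k)^-1 *: (yin k (N k) - y k).

Hypotheses (eta_gt0 : forall l, 0 < eta l) (N_gt0 : forall k, (0 < N k)%N).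

Lemma bounded_normalized_displacement : bounded_seq normalized_displacement.
Proof.
apply: (@bounded_seq_entrywise _ _ _ 1) => k i.
have beta_gt0 := block_sum_gt0 k N_gt0 eta_gt0.
rewrite mxE normrM normfV (gtr0_norm beta_gt0) ler_pdivrMl // mulr1.
exact: algorithm1_outer_displacement_entry.
Qed.

Lemma algorithm1_perturbed k :
  y k.+1 = A (y k + block_sum N eta k *: normalized_displacement k).
Proof.
have [_ [_ [_ ->]]] := alg.
have beta_neq0 := lt0r_neq0 (block_sum_gt0 k N_gt0 eta_gt0).
by rewrite /normalized_displacement scalerA mulfV // scale1r addrC subrK.
Qed.

End algorithm1.

Theorem lemma1 (R : realType) (L m : nat) (C : 'I_m -> set 'rV[R]_L)
  (Prox : 'rV[R]_L -> R) (A : 'rV[R]_L -> 'rV[R]_L) (phi : 'rV[R]_L -> R)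
  (eps : R) (eta : nat -> R) (N : nat -> nat) (Nmax : nat) (ybar : 'rV[R]_L)
  (y : nat -> 'rV[R]_L) (yin v : nat -> nat -> 'rV[R]_L) :
  (forall i, closed (C i) /\ convex_set (C i)) ->
  (forall x, 0 <= Prox x) ->
  strongly_perturbation_resilient Prox A ->
  0 < eps ->
  (forall x0, eps_output_exists Prox eps (basic_seq A x0)) ->
  (forall l, 0 < eta l) -> summable_seq eta ->
  (0 < Nmax)%N -> (forall k, (0 < N k)%N /\ (N k <= Nmax)%N) ->
  algorithm1 A phi eta N ybar y yin v ->
  forall eps' : R, eps < eps' -> eps_output_exists Prox eps' y.
Proof.
move=> _ _ [_ resilient] eps_gt0 basic_output eta_gt0 eta_summable _ N_bounds
  alg eps' lt_eps.
have N_gt0 k : (0 < N k)%N by case: (N_bounds k).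
apply: (resilient eps eps_gt0 basic_output eps' lt_eps y
  (normalized_displacement eta N y yin) (block_sum N eta)).
- exact: bounded_normalized_displacement alg eta_gt0 N_gt0.
- by move=> k; apply/ltW/block_sum_gt0.
- exact: is_cvg_series_block_sum.
- exact: algorithm1_perturbed alg eta_gt0 N_gt0.
Qed.
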